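(* Let $G=(V,E)$ be a graph containing at least one cycle, with $n$ vertices, $m$ edges and $k(G)$ connected components, and let $i$ be a nonnegative integer. Then $g(G)>n-k(G)-i$ if and only if \[[x^i]T_G(x,1)=\binom{m-i-1}{n-k(G)-i}.\]
   Context: $T_G(x,y)$ is the Tutte polynomial of $G$, i.e. $T_G(x,y)=\sum_{A\subseteq E}(x-1)^{r-rk(A)}(y-1)^{|A|-rk(A)}$ with $rk(A)=n-k(A)$, $k(A)$ the number of components of the spanning subgraph $(V,A)$, and $r=n-k(G)$. $[x^i]f(x)$ denotes the coefficient of $x^i$. The girth $g(G)$ is the length of a shortest cycle of $G$. *)

From mathcomp Require Import all_boot all_order all_algebra.
Set Implicit Arguments. Unset Strict Implicit. Unset Printing Implicit Defensive.
Import Order.TTheory GRing.Theory Num.Theory.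

(* A (multi)graph G = (V, E) with loops and parallel edges allowed:
   vertex set V, edge set E (finite types), and ends e = endpoints of e. *)
Section Graph.
Variables (V E : finType) (ends : E -> V * V).

Definition joins (e : E) (u v : V) : bool :=
  (ends e == (u, v)) || (ends e == (v, u)).

Definition adj (A : {set E}) : rel V :=
  fun u v => [exists e in A, joins e u v].

Definition ncomp (A : {set E}) : nat := n_comp (connect (adj A)) (predT : pred V).

Definition rk (A : {set E}) : nat := #|V| - ncomp A.

Definition grank : nat := rk [set: E].

Local Open Scope ring_scope.

(* Tutte polynomial as a polynomial in x (outer variable) with coefficients
   polynomials in y (inner variable):
   T_G(x,y) = sum_{A subset E} (x-1)^(r - rk A) (y-1)^(|A| - rk A). *)
Definition tutte : {poly {poly int}} :=
  \sum_(A : {set E}) ('X - 1) ^+ (grank - rk A) * (('X - 1) ^+ (#|A| - rk A))%:P.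

Definition tutte_x1 : {poly int} := map_poly (fun p : {poly int} => p.[1]) tutte.

Local Close Scope ring_scope.

(* A cycle of length l >= 1: distinct vertices v_0..v_{l-1}, distinct edges
   e_0..e_{l-1}, e_j joining v_j and v_{j+1 mod l}.  (l = 1: a loop;
   l = 2: two parallel edges.) *)
Definition cycle_of_len (l : nat) : bool :=
  [exists vs : l.-tuple V, exists es : l.-tuple E,
     [&& 0 < l, uniq vs, uniq es &
      [forall j : 'I_l, joins (tnth es j) (tnth vs j)
                                 (nth (tnth vs j) vs ((j.+1) %% l)%N)]]].

Definition has_cycle : Prop := exists l, cycle_of_len l.

Definition girth (H : has_cycle) : nat := ex_minn H.

End Graph.

(* binomial coefficient on integers, with the convention C(a,b) = 0 when
   b < 0 (and also when a < 0, which only occurs together with b < 0 in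
   the statement, since m >= r + 1 for a graph with a cycle). *)
Definition binz (a b : int) : int :=
  if (0 <= b)%R && (0 <= a)%R then Posz (binomial (absz a) (absz b)) else 0.

From Pilot Require Import Defs.
From mathcomp Require Import all_boot all_order all_algebra zify.
Set Implicit Arguments. Unset Strict Implicit. Unset Printing Implicit Defensive.
Import Order.TTheory GRing.Theory Num.Theory.

(* The edge sets of G form a matroid with rank function rk A = n - k(A), and
   T_G(x,1) = sum over independent A of (x-1)^(r-|A|).  For any matroid of rank
   r on m elements, deletion-contraction gives by induction on m that
   [x^i]T(x,1) <= C(m-i-1, r-i), the value for the uniform matroid U_{r,m},
   with equality iff every set of at most r-i elements is independent.  In a
   graph the dependent edge sets are those containing a cycle, and a shortest
   cycle is a dependent set of g(G) edges, so equality holds iff g(G) > r-i. *)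

Definition uniform_coef (m r i : nat) : nat :=
  if i <= r then 'C(m.-1 - i, r - i) else 0.

Lemma uniform_coefD n r i :
  r < n -> uniform_coef n.+1 r.+1 i = uniform_coef n r.+1 i + uniform_coef n r i.
Proof.
move=> rn; rewrite /uniform_coef.
have [ir|ri] := leqP i r.
  rewrite !ifT; try lia.
  have -> : n - i = (n.-1 - i).+1 by lia.
  by rewrite subSn // binS.
rewrite addn0; case: ifP => // ir1.
have -> : i = r.+1 by lia.
by rewrite !subnn !bin0.
Qed.

Lemma uniform_coef_lt n r i :
  r <= n -> i < r -> uniform_coef n r i < uniform_coef n.+1 r i.
Proof.
move=> rn ir; rewrite /uniform_coef !ifT; try lia.
have -> : n.+1.-1 - i = (n.-1 - i).+1 by lia.
have -> : r - i = (r - i).-1.+1 by lia.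
by rewrite binS -[X in X < _]addn0 ltn_add2l bin_gt0; lia.
Qed.

Lemma uniform_coef_ge n r i : r <= i -> uniform_coef n.+1 r i = uniform_coef n r i.
Proof.
rewrite /uniform_coef leq_eqVlt => /predU1P[->|ri]; first by rewrite !subnn !bin0.
by have -> : (i <= r) = false by lia.
Qed.

Lemma uniform_coefS n r i : uniform_coef n.+1 r.+1 i.+1 = uniform_coef n r i.
Proof. by rewrite /uniform_coef ltnS subSS; congr (if _ then 'C(_, _) else _); lia. Qed.

Lemma uniform_coef0 n r : uniform_coef n.+1 r 0 = 'C(n, r).
Proof. by rewrite /uniform_coef !subn0. Qed.

Lemma finset_ind (T : finType) (P : {set T} -> Prop) :
  P set0 -> (forall x (X : {set T}), x \notin X -> P X -> P (x |: X)) ->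
  forall X, P X.
Proof.
move=> P0 PU X; have [n] := ubnP #|X|; elim: n X => // n IH X.
have [->|[x xX]] := set_0Vmem X; rewrite // (cardsD1 x) xX ltnS => cardX.
by rewrite -(setD1K xX); apply: PU; [rewrite !inE eqxx | apply: IH].
Qed.

Lemma exists_subset_card (T : finType) (S : {set T}) k :
  k <= #|S| -> exists2 X : {set T}, X \subset S & #|X| = k.
Proof.
elim/finset_ind: S k => [|x S xS IH] k.
  by rewrite cards0 leqn0 => /eqP->; exists set0; rewrite ?sub0set ?cards0.
rewrite cardsU1 xS add1n leq_eqVlt ltnS => /predU1P[->|/IH[X sXS <-]].
  by exists (x |: S); rewrite ?cardsU1 ?xS.
by exists X; rewrite // (subset_trans sXS) ?subsetUr.
Qed.

Lemma big_subsetD1 (T : finType) (R : Type) (idx : R) (op : Monoid.com_law idx)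
    (S : {set T}) e (P : pred {set T}) (F : {set T} -> R) : e \in S ->
  \big[op/idx]_(X : {set T} | (X \subset S) && P X) F X =
  op (\big[op/idx]_(X : {set T} | (X \subset S :\ e) && P X) F X)
     (\big[op/idx]_(X : {set T} | (X \subset S :\ e) && P (e |: X)) F (e |: X)).
Proof.
move=> eS; rewrite (bigID (fun X : {set T} => e \in X)) /= Monoid.mulmC; congr (op _ _).
  by apply: eq_bigl => X; rewrite subsetD1 andbAC.
rewrite (reindex_onto (fun Y => e |: Y) (fun X => X :\ e)) /=; last first.
  by move=> X /andP[_ eX]; rewrite setD1K.
apply: eq_bigl => Y; rewrite setU11 andbT subsetD1.
have [eY|eY] := boolP (e \in Y).
  have -> : ((e |: Y) :\ e == Y) = false.
    by apply/negbTE; apply: contraTneq eY => <-; rewrite !inE eqxx.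
  by rewrite !andbF.
by rewrite setU1K // eqxx subUset sub1set eS /= !andbT.
Qed.

Lemma connect_ind (T : finType) (e R : rel T) :
  reflexive R -> transitive R -> subrel e R -> subrel (connect e) R.
Proof.
move=> Rrefl Rtrans eR x y /connectP[p]; elim: p x => [|z p IH] x /=.
  by move=> _ ->.
by case/andP=> /eR Rxz /IH Rzy /Rzy; apply: Rtrans.
Qed.

Section RankFunctions.
Variable E : finType.
Implicit Types (rk : {set E} -> nat) (A B S X Y : {set E}) (e : E).

Definition is_rank rk : Prop :=
  [/\ rk set0 = 0,
      forall A e, rk A <= rk (e |: A) <= (rk A).+1 &
      forall A B e, A \subset B -> rk (e |: B) - rk B <= rk (e |: A) - rk A].

Definition contract rk A X := rk (A :|: X) - rk A.

Definition indep rk X := rk X == #|X|.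

Definition small_indep rk S k := forall X, X \subset S -> #|X| <= k -> indep rk X.

Local Open Scope ring_scope.

Definition rank_tutte_x1 rk S : {poly int} :=
  \sum_(X : {set E} | (X \subset S) && indep rk X) ('X - 1) ^+ (rk S - #|X|)%N.

Definition rank_tutte_coef_spec rk S i : Prop :=
  (rank_tutte_x1 rk S)`_i <= (uniform_coef #|S| (rk S) i)%:Z /\
  ((rank_tutte_x1 rk S)`_i = (uniform_coef #|S| (rk S) i)%:Z <->
   small_indep rk S (rk S - i)%N).

End RankFunctions.

Section RankFunctionTheory.
Variables (E : finType) (rk : {set E} -> nat).
Hypothesis rkP : is_rank rk.
Implicit Types (A B S X Y : {set E}) (e : E).

Lemma rk0 : rk set0 = 0.
Proof. by case: rkP. Qed.

Lemma rkU1 A e : rk A <= rk (e |: A) <= (rk A).+1.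
Proof. by case: rkP. Qed.

Lemma rk_submod A B e : A \subset B -> rk (e |: B) - rk B <= rk (e |: A) - rk A.
Proof. by case: rkP => _ _; apply. Qed.

Lemma rkU_le X B : rk (X :|: B) <= rk B + #|X|.
Proof.
elim/finset_ind: X => [|x X xX IH]; first by rewrite set0U cards0 addn0.
by rewrite -setUA cardsU1 xX; have := rkU1 (X :|: B) x; lia.
Qed.

Lemma rk_mono A B : A \subset B -> rk A <= rk B.
Proof.
move/setUidPr <-; elim/finset_ind: B => [|x X _ IH]; first by rewrite setU0.
by rewrite setUCA; have := rkU1 (A :|: X) x; lia.
Qed.

Lemma rk_le_card A : rk A <= #|A|.
Proof. by have := rkU_le A set0; rewrite setU0 rk0. Qed.

Lemma rk_lt_card X S : X \subset S -> rk X < #|X| -> rk S < #|S|.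
Proof.
move=> sXS ltX.
have sSU : S \subset (S :\: X) :|: X.
  by apply/subsetP => x xS; rewrite !inE xS orbC; case: (x \in X).
have := rk_mono sSU; have := rkU_le (S :\: X) X; rewrite cardsDS //.
have := subset_leq_card sXS; lia.
Qed.

Lemma indep0 : indep rk set0.
Proof. by rewrite /indep rk0 cards0. Qed.

Lemma indep_sub X Y : Y \subset X -> indep rk X -> indep rk Y.
Proof.
move=> sYX /eqP rkX; apply/eqP.
have sXU : X \subset (X :\: Y) :|: Y.
  by apply/subsetP => x xX; rewrite !inE xX orbC; case: (x \in Y).
have := rk_mono sXU; have := rkU_le (X :\: Y) Y; rewrite cardsDS //.
have := rk_le_card Y; have := subset_leq_card sYX; lia.
Qed.

Lemma indep_card_le X S : X \subset S -> indep rk X -> #|X| <= rk S.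
Proof. by move=> sXS /eqP <-; apply: rk_mono. Qed.

Lemma small_indep0 S : small_indep rk S 0.
Proof. by move=> X _; rewrite leqn0 cards_eq0 => /eqP->; apply: indep0. Qed.

Lemma small_indep_rk_succ S : small_indep rk S (rk S).+1 <-> #|S| <= rk S.
Proof.
split=> [smallS | cardS X sXS _].
  rewrite leqNgt; apply/negP => ltS.
  have [X sXS cardX] := exists_subset_card ltS.
  by have := indep_card_le sXS (smallS X sXS (eq_leq cardX)); rewrite cardX ltnn.
by apply: indep_sub sXS _; rewrite /indep eqn_leq rk_le_card.
Qed.

Lemma rkU1_loop A e : rk [set e] = 0 -> rk (e |: A) = rk A.
Proof.
move=> loop_e; have := rk_submod e (sub0set A); rewrite setU0 loop_e rk0.
by have := rkU1 A e; lia.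
Qed.

Lemma loop_dep X e : rk [set e] = 0 -> e \in X -> ~~ indep rk X.
Proof.
move=> loop_e eX; rewrite /indep -(setD1K eX) rkU1_loop // cardsU1 !inE eqxx /=.
by rewrite add1n neq_ltn ltnS rk_le_card.
Qed.

Lemma rkD1_loop S e : e \in S -> rk [set e] = 0 -> rk (S :\ e) = rk S.
Proof. by move=> eS loop_e; rewrite -{2}(setD1K eS) rkU1_loop. Qed.

Lemma small_indep_loop S k e :
  rk [set e] = 0 -> e \in S -> small_indep rk S k -> k = 0.
Proof.
move=> loop_e eS smallS; apply/eqP; rewrite -leqn0 leqNgt; apply/negP => k_gt0.
have := smallS [set e]; rewrite sub1set eS cards1 => /(_ isT k_gt0).
by apply/negP/(loop_dep loop_e); rewrite inE.
Qed.

Section Coloop.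
Variables (S : {set E}) (e : E).
Hypotheses (eS : e \in S) (coloop_e : rk (S :\ e) < rk S).

Lemma rk_coloop : rk S = (rk (S :\ e)).+1.
Proof. by have := rkU1 (S :\ e) e; rewrite setD1K //; lia. Qed.

Lemma rkU1_coloop Y : Y \subset S :\ e -> rk (e |: Y) = (rk Y).+1.
Proof.
move=> sY; have := rk_submod e sY; rewrite setD1K // rk_coloop.
by have := rkU1 Y e; lia.
Qed.

Lemma indepU1_coloop Y : Y \subset S :\ e -> indep rk (e |: Y) = indep rk Y.
Proof.
move=> sY; have eY : e \notin Y by move: sY; rewrite subsetD1 => /andP[].
by rewrite /indep rkU1_coloop // cardsU1 eY.
Qed.

Lemma small_indep_coloop k : small_indep rk S k <-> small_indep rk (S :\ e) k.
Proof.
split=> smallS X sX cardX.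
  by apply: smallS cardX; apply: subset_trans sX (subD1set S e).
have sXe : X :\ e \subset S :\ e by apply: setSD.
have [eX|eX] := boolP (e \in X); last first.
  by apply: smallS cardX; rewrite subsetD1 sX.
rewrite -(setD1K eX) indepU1_coloop //; apply: smallS sXe _.
by apply: leq_trans cardX; apply: subset_leq_card; apply: subD1set.
Qed.

End Coloop.

Section Nonloop.
Variable e : E.
Hypothesis nonloop_e : rk [set e] = 1.

Lemma contract_nonloop S :
  e \in S -> contract rk [set e] (S :\ e) = (rk S).-1 /\ 0 < rk S.
Proof.
move=> eS; rewrite /contract setD1K // nonloop_e subn1; split => //.
by rewrite -nonloop_e; apply: rk_mono; rewrite sub1set.
Qed.

Lemma indep_contract1 Y :
  e \notin Y -> indep (contract rk [set e]) Y = indep rk (e |: Y).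
Proof.
move=> eY; rewrite /indep /contract nonloop_e cardsU1 eY add1n.
have : 1 <= rk (e |: Y) by rewrite -nonloop_e; apply: rk_mono; apply: subsetUl.
by case: (rk (e |: Y)) => // n _; rewrite subn1.
Qed.

Lemma small_indep_nonloop S k : e \in S ->
  small_indep rk S k <->
  small_indep rk (S :\ e) k /\ small_indep (contract rk [set e]) (S :\ e) k.-1.
Proof.
move=> eS; split=> [smallS | [smallSe smallC] X sX cardX].
  split=> X sX cardX.
    by apply: smallS cardX; apply: subset_trans sX (subD1set S e).
  have eX : e \notin X by move: sX; rewrite subsetD1 => /andP[].
  rewrite indep_contract1 //; have [->|/set0Pn[x xX]] := eqVneq X set0.
    by rewrite setU0 /indep nonloop_e cards1.
  apply: smallS; first by rewrite subUset sub1set eS (subset_trans sX (subD1set S e)).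
  by move: cardX; rewrite cardsU1 eX (cardsD1 x X) xX; lia.
have [eX|eX] := boolP (e \in X); last first.
  by apply: smallSe cardX; rewrite subsetD1 sX.
rewrite -(setD1K eX) -indep_contract1 ?setD11 //; apply: smallC; first exact: setSD.
by move: cardX; rewrite (cardsD1 e X) eX; lia.
Qed.

End Nonloop.

Lemma is_rank_contract A : is_rank (contract rk A).
Proof.
rewrite /contract; split=> [|X e|X Y e sXY]; first by rewrite setU0 subnn.
  by rewrite setUCA; have := rkU1 (A :|: X) e; have := rk_mono (subsetUl A X); lia.
have subnB2r a b c : c <= b -> b <= a -> a - c - (b - c) = a - b by lia.
have rk_chain Z : rk A <= rk (A :|: Z) <= rk (e |: (A :|: Z)).
  by rewrite rk_mono ?subsetUl //; case/andP: (rkU1 (A :|: Z) e).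
rewrite [A :|: (e |: X)]setUCA [A :|: (e |: Y)]setUCA.
case/andP: (rk_chain X) => ? ?; case/andP: (rk_chain Y) => ? ?.
by rewrite !subnB2r //; apply: rk_submod; apply: setUS.
Qed.

Local Open Scope ring_scope.

Lemma rank_tutte_x1_loop S e : e \in S -> rk [set e] = 0%N ->
  rank_tutte_x1 rk S = rank_tutte_x1 rk (S :\ e).
Proof.
move=> eS loop_e; rewrite /rank_tutte_x1 (big_subsetD1 _ _ _ eS) /=.
rewrite [X in _ + X]big_pred0 ?addr0 ?rkD1_loop //.
by move=> X; rewrite (negbTE (loop_dep loop_e (setU11 e X))) andbF.
Qed.

Lemma rank_tutte_x1_coloop S e : e \in S -> (rk (S :\ e) < rk S)%N ->
  rank_tutte_x1 rk S = 'X * rank_tutte_x1 rk (S :\ e).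
Proof.
move=> eS coloop_e; rewrite /rank_tutte_x1 (big_subsetD1 _ _ _ eS) /=.
rewrite [X in _ + X](eq_bigl (fun Y => (Y \subset S :\ e) && indep rk Y)); last first.
  by move=> Y; apply: andb_id2l; apply: indepU1_coloop eS coloop_e Y.
rewrite -big_split mulr_sumr (rk_coloop eS coloop_e).
apply: eq_bigr => Y /andP[sY indepY].
have eY : e \notin Y by move: sY; rewrite subsetD1 => /andP[].
rewrite cardsU1 eY add1n subSS subSn ?(indep_card_le sY indepY) //.
by rewrite exprS /= mulrBl mul1r subrK.
Qed.

Lemma rank_tutte_x1_del_con S e :
    e \in S -> rk [set e] = 1%N -> rk (S :\ e) = rk S ->
  rank_tutte_x1 rk S =
    rank_tutte_x1 rk (S :\ e) + rank_tutte_x1 (contract rk [set e]) (S :\ e).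
Proof.
move=> eS nonloop_e rkSe; rewrite /rank_tutte_x1 (big_subsetD1 _ _ _ eS) /= rkSe.
congr (_ + _); apply: eq_big => [Y | Y /andP[sY _]].
  by apply: andb_id2l; rewrite subsetD1 => /andP[_ eY]; rewrite indep_contract1.
have eY : e \notin Y by move: sY; rewrite subsetD1 => /andP[].
rewrite (proj1 (contract_nonloop nonloop_e eS)) cardsU1 eY add1n.
by congr (_ ^+ _); lia.
Qed.

Lemma rank_tutte_coef_spec0 i : rank_tutte_coef_spec rk set0 i.
Proof.
rewrite /rank_tutte_coef_spec rk0 cards0 sub0n.
have -> : rank_tutte_x1 rk set0 = 1.
  rewrite /rank_tutte_x1 (big_pred1 set0) ?rk0 ?cards0 // => X.
  by rewrite subset0 andb_idr // => /eqP->; apply: indep0.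
by rewrite coef1; case: i => [|i] /=; split=> //; split=> // _; apply: small_indep0.
Qed.

Lemma rank_tutte_coef_spec_loop S e : e \in S -> rk [set e] = 0%N ->
  (forall i, rank_tutte_coef_spec rk (S :\ e) i) ->
  forall i, rank_tutte_coef_spec rk S i.
Proof.
move=> eS loop_e IH i; have [le_coef eq_coefP] := IH i.
rewrite /rank_tutte_coef_spec (rank_tutte_x1_loop eS loop_e) (cardsD1 e S) eS.
rewrite -(rkD1_loop eS loop_e) in eq_coefP *; set r := rk (S :\ e) in le_coef eq_coefP *.
have [ir|ri] := ltnP i r.
  have lt_coef := uniform_coef_lt (rk_le_card (S :\ e)) ir.
  split; first by apply: le_trans le_coef _; rewrite lez_nat ltnW.
  split=> [eq_coef | /(small_indep_loop loop_e eS)]; last by lia.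
  by move: le_coef; rewrite eq_coef lez_nat leqNgt lt_coef.
rewrite uniform_coef_ge // (eqP ri) in eq_coefP *.
split=> //; rewrite eq_coefP; split=> _; apply: small_indep0.
Qed.

Lemma rank_tutte_coef_spec_coloop S e : e \in S -> (rk (S :\ e) < rk S)%N ->
  (forall i, rank_tutte_coef_spec rk (S :\ e) i) ->
  forall i, rank_tutte_coef_spec rk S i.
Proof.
move=> eS coloop_e IH i.
rewrite /rank_tutte_coef_spec (rank_tutte_x1_coloop eS coloop_e) coefXM.
rewrite (cardsD1 e S) eS (rk_coloop eS coloop_e) (small_indep_coloop eS coloop_e).
case: i => [|i] /=; last by rewrite uniform_coefS subSS; apply: IH.
rewrite uniform_coef0 subn0 small_indep_rk_succ; split=> //.
by have := bin_gt0 #|S :\ e| (rk (S :\ e)).+1; lia.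
Qed.

Lemma rank_tutte_coef_spec_del_con S e :
    e \in S -> rk [set e] = 1%N -> rk (S :\ e) = rk S ->
  (forall i, rank_tutte_coef_spec rk (S :\ e) i) ->
  (forall i, rank_tutte_coef_spec (contract rk [set e]) (S :\ e) i) ->
  forall i, rank_tutte_coef_spec rk S i.
Proof.
move=> eS nonloop_e rkSe IHdel IHcon i.
have [le_del eq_delP] := IHdel i; have [le_con eq_conP] := IHcon i.
have [rkC rkS_gt0] := contract_nonloop nonloop_e eS.
have rk_le : (rk S <= #|S :\ e|)%N by rewrite -rkSe rk_le_card.
rewrite /rank_tutte_coef_spec (rank_tutte_x1_del_con eS nonloop_e rkSe) coefD.
rewrite rkSe in le_del eq_delP; rewrite rkC in le_con eq_conP.
rewrite (small_indep_nonloop nonloop_e _ eS) predn_sub -eq_delP -eq_conP.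
rewrite (cardsD1 e S) eS add1n; case: (rk S) rkS_gt0 rk_le le_del le_con => // r _.
by move=> /uniform_coefD -> /=; rewrite PoszD; lia.
Qed.

End RankFunctionTheory.

Lemma rank_tutte_coef_spec_holds (E : finType) (rk : {set E} -> nat) S i :
  is_rank rk -> rank_tutte_coef_spec rk S i.
Proof.
have [n] := ubnP #|S|; elim: n rk S i => // n IH rk S i ltSn rkP.
have [->|[e eS]] := set_0Vmem S; first exact: rank_tutte_coef_spec0.
have IHSe rk' : is_rank rk' -> forall i, rank_tutte_coef_spec rk' (S :\ e) i.
  by move=> rkP' j; apply: IH rkP'; move: ltSn; rewrite (cardsD1 e S) eS.
have /andP[_] := rkU1 rkP set0 e; rewrite setU0 rk0 // leq_eqVlt ltnS leqn0.
case/orP=> [/eqP nonloop_e | /eqP loop_e]; last first.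
  exact: rank_tutte_coef_spec_loop eS loop_e (IHSe rk rkP) i.
have [coloop_e | ] := ltnP (rk (S :\ e)) (rk S).
  exact: rank_tutte_coef_spec_coloop eS coloop_e (IHSe rk rkP) i.
rewrite leq_eqVlt ltnNge rk_mono ?subD1set // orbF => /eqP rkSe.
apply: rank_tutte_coef_spec_del_con eS nonloop_e _ (IHSe rk rkP) _ i => //.
exact/IHSe/is_rank_contract.
Qed.

Lemma in_closure2 (T : finType) (e : rel T) u v x :
  (x \in closure e (pred2 u v)) = connect e x u || connect e x v.
Proof.
apply/idP/idP.
  by case/pred0Pn => y /andP[]; rewrite !inE => cxy /pred2P[] <-; rewrite cxy ?orbT.
by case/orP=> cx; apply/pred0Pn; [exists u | exists v]; rewrite !inE cx eqxx ?orbT.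
Qed.

Section GraphicRank.
Variables (V E : finType) (ends : E -> V * V).
Implicit Types (A B X : {set E}) (f : E).
Local Notation cn A := (connect (adj ends A)).

Lemma adj_sym A : symmetric (adj ends A).
Proof.
by move=> x y; apply/existsP/existsP => -[f /andP[fA j]]; exists f;
  rewrite fA /joins orbC.
Qed.

Lemma connect_adj_mono A B : A \subset B -> subrel (cn A) (cn B).
Proof.
move=> /subsetP sAB; apply: connect_sub => x y /existsP[f /andP[fA j]].
by apply: connect1; apply/existsP; exists f; rewrite sAB.
Qed.

Lemma connect_adjU1 A f x y :
  let a := closure (adj ends A) (pred2 (ends f).1 (ends f).2) in
  cn (f |: A) x y = cn A x y || (x \in a) && (y \in a).
Proof.
move=> a; have symA := sym_connect_sym (adj_sym A).
have symU := sym_connect_sym (adj_sym (f |: A)).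
have cnAU : subrel (cn A) (cn (f |: A)) by apply: connect_adj_mono; apply: subsetUr.
apply/idP/idP => [|/orP[/cnAU //|/andP[ax ay]]].
  have a_cn := closed_connect (closure_closed symA (pred2 (ends f).1 (ends f).2)).
  apply: (@connect_ind _ _ [rel x y | cn A x y || (x \in a) && (y \in a)])
    => [z|y' x' z|x' y'] /=.
  - by rewrite connect0.
  - case/orP=> [c1|/andP[a1 a2]] /orP[c2|/andP[a3 a4]].
    + by rewrite (connect_trans c1 c2).
    + by rewrite (a_cn _ _ c1) a3 a4 orbT.
    + by rewrite -(a_cn _ _ c2) a1 a2 orbT.
    + by rewrite a1 a4 orbT.
  case/existsP=> g /andP[]; rewrite in_setU1 => /orP[/eqP-> j | gA j]; last first.
    by rewrite connect1 //; apply/existsP; exists g; rewrite gA.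
  by apply/orP; right; rewrite !in_closure2; case/orP: j => /eqP-> /=;
    rewrite !connect0 ?orbT.
have cn_uv : cn (f |: A) (ends f).1 (ends f).2.
  apply: connect1; apply/existsP; exists f.
  by rewrite setU11 /joins -surjective_pairing eqxx.
have cn_u z : z \in a -> cn (f |: A) z (ends f).1.
  rewrite in_closure2 => /orP[/cnAU // | /cnAU czv].
  by apply: connect_trans czv _; rewrite symU.
by apply: connect_trans (cn_u x ax) _; rewrite symU cn_u.
Qed.

Lemma ncompE A : ncomp ends A = n_comp (adj ends A) V.
Proof.
rewrite /ncomp (@eq_n_comp _ _ (adj ends A)); first exact: eq_n_comp_r.
by move=> x y; apply/idP/idP; [apply: connect_sub | apply: connect1].
Qed.

Lemma ncompU1 A f :
  ncomp ends A = ncomp ends (f |: A) + ~~ cn A (ends f).1 (ends f).2.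
Proof.
have symA := sym_connect_sym (adj_sym A).
have symU := sym_connect_sym (adj_sym (f |: A)).
move: (connect_adjU1 A f).
set u := (ends f).1; set v := (ends f).2; set a := closure _ _ => /= cnU.
have [ua va] : u \in a /\ v \in a by rewrite !in_closure2 !connect0 !orbT.
have aU : a =i closure (adj ends (f |: A)) (pred2 u v).
  move=> x; rewrite [RHS]in_closure2 !cnU ua va !andbT in_closure2.
  by case: (cn A x u); case: (cn A x v).
have cnU_uv : cn (f |: A) u v by rewrite cnU ua va orbT.
rewrite !ncompE !(n_compC a) n_comp_closure2 // (eq_n_comp_r aU).
rewrite n_comp_closure2 // cnU_uv /=.
suff -> : n_comp (adj ends A) [predC a] = n_comp (adj ends (f |: A)) [predC a].
  by rewrite add1n addSn addnC.
apply: eq_card => x; rewrite !inE; case ax: (x \in a); rewrite ?andbF ?andbT //.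
rewrite /roots /fingraph.root (@eq_pick _ _ (cn (f |: A) x)) // => y.
by rewrite cnU ax /= orbF.
Qed.

Local Notation rk := (rk ends).

Lemma ncomp_le_card A : ncomp ends A <= #|V|.
Proof. exact: max_card. Qed.

Lemma rk_setU1 A f : rk (f |: A) = rk A + ~~ cn A (ends f).1 (ends f).2.
Proof. by rewrite /Defs.rk; have := ncompU1 A f; have := ncomp_le_card A; lia. Qed.

Lemma rk_set0 : rk set0 = 0.
Proof.
have cn0 x y : cn set0 x y -> x = y.
  by case/connectP => -[_ ->|z p] //= /andP[/existsP[g]]; rewrite inE.
rewrite /Defs.rk ncompE /n_comp_mem.
suff -> : #|predI (roots (adj ends set0)) V| = #|V| by rewrite subnn.
apply: eq_card => x.
by rewrite !inE andbT /roots; apply/eqP/esym/cn0/connect_root.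
Qed.

Lemma is_rank_graph : is_rank rk.
Proof.
split=> [|A f|A B f sAB]; first exact: rk_set0.
  by rewrite rk_setU1; case: (~~ _); rewrite ?addn0 ?addn1 leqnn leqnSn.
rewrite !rk_setU1 !addKn.
case cA: (cn A _ _); last exact: leq_b1.
by rewrite (connect_adj_mono sAB cA).
Qed.

End GraphicRank.

Section Cycles.
Variables (V E : finType) (ends : E -> V * V).
Local Notation cn A := (connect (adj ends A)).
Local Notation rk := (rk ends).

Lemma cycle_dep l : cycle_of_len ends l -> exists2 X : {set E}, #|X| = l & rk X < #|X|.
Proof.
move=> /existsP[vs /existsP[es /and4P[]]].
case: l vs es => // L vs es _ _ ues /forallP cyc.
pose v0 := tnth vs ord0; pose e0 := tnth es ord0.
have joins_j j : j < L.+1 ->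
    joins ends (nth e0 es j) (nth v0 vs j) (nth v0 vs (j.+1 %% L.+1)).
  move=> ltjL; have := cyc (Ordinal ltjL); rewrite (tnth_nth e0) (tnth_nth v0) /=.
  by rewrite (set_nth_default v0) // size_tuple ltn_pmod.
pose P := [set x in take L es].
exists [set x in es]; first by rewrite cardsE (card_uniqP ues) size_tuple.
have esE : [set x in es] = nth e0 es L |: P.
  have es_rcons : tval es = rcons (take L es) (nth e0 es L).
    by rewrite -take_nth ?size_tuple // take_oversize ?size_tuple.
  apply/setP => z; rewrite !inE -[z \in es]/(z \in tval es) [in LHS]es_rcons.
  by rewrite mem_rcons inE.
have cardP : #|P| <= L.
  by rewrite cardsE (leq_trans (card_size _)) // size_take size_tuple ltnSn.
have cn_path j : j <= L -> cn P (nth v0 vs 0) (nth v0 vs j).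
  elim: j => [|j IHj] ltjL; first exact: connect0.
  apply: (connect_trans (IHj (ltnW ltjL))); apply: connect1.
  have := joins_j j (ltnW ltjL); rewrite modn_small ?ltnS // => jn.
  apply/existsP; exists (nth e0 es j); rewrite jn andbT inE -(nth_take e0 ltjL).
  by apply: mem_nth; rewrite size_take size_tuple ltnS leqnn.
have cn_last : cn P (ends (nth e0 es L)).1 (ends (nth e0 es L)).2.
  have := joins_j L (leqnn _); rewrite modnn /joins.
  case/orP=> /eqP->; last exact: cn_path.
  by rewrite (sym_connect_sym (adj_sym ends P)); exact: cn_path.
rewrite cardsE (card_uniqP ues) size_tuple esE rk_setU1 cn_last addn0 ltnS.
exact: leq_trans (rk_le_card (is_rank_graph ends) P) cardP.
Qed.

Lemma dep_edge X : rk X < #|X| ->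
  exists2 e, e \in X & cn (X :\ e) (ends e).1 (ends e).2.
Proof.
elim/finset_ind: X => [|x X xX IH]; first by rewrite rk_set0 cards0.
rewrite rk_setU1 cardsU1 xX add1n; case cx: (cn X _ _) => /=.
  by move=> _; exists x; rewrite ?setU11 // setU1K.
rewrite addn1 ltnS => /IH[f fX cf]; exists f; first by rewrite setU1r.
by apply: connect_adj_mono cf; apply: setSD; apply: subsetUr.
Qed.

Lemma joins_ends_eq f a b c d :
  joins ends f a b -> joins ends f c d -> (c == a) || (c == b).
Proof.
by rewrite /joins => /orP[] /eqP-> /orP[] /eqP[] -> ->; rewrite eqxx ?orbT.
Qed.

Section PathEdges.
Variables (Y : {set E}) (e : E).

Definition pick_edge (x y : V) : E := odflt e [pick f in Y | joins ends f x y].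

Lemma pick_edgeP x y :
  adj ends Y x y -> pick_edge x y \in Y /\ joins ends (pick_edge x y) x y.
Proof.
case/existsP=> f /andP[fY j]; rewrite /pick_edge.
by case: pickP => [g /andP[gY gj] | /(_ f)] //; rewrite fY j.
Qed.

Lemma mem_pick_edges s x f : path (adj ends Y) x s -> f \in pairmap pick_edge x s ->
  exists a b, [/\ a \in x :: s, b \in x :: s, joins ends f a b & f \in Y].
Proof.
elim: s x => [|y s IH] x //= /andP[axy ps]; rewrite inE => /orP[/eqP-> | fs].
  have [pY j] := pick_edgeP axy; exists x, y; split => //; by rewrite !inE eqxx ?orbT.
have [a [b [ha hb j fY]]] := IH y ps fs; exists a, b.
by split => //; rewrite inE ?ha ?hb orbT.
Qed.

Lemma uniq_pick_edges s x :
  path (adj ends Y) x s -> uniq (x :: s) -> uniq (pairmap pick_edge x s).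
Proof.
elim: s x => [|y s IH] x //= /andP[axy ps] /andP[xs us]; rewrite IH // andbT.
apply/negP => /(mem_pick_edges ps) [a [b [ha hb j _]]].
have [_ /(joins_ends_eq j)] := pick_edgeP axy.
by case/orP=> /eqP ex; move: xs; rewrite ex ?ha ?hb.
Qed.

End PathEdges.

Lemma dep_cycle X : rk X < #|X| -> exists2 l, l <= #|X| & cycle_of_len ends l.
Proof.
move=> depX; have [e eX] := dep_edge depX.
set Y := X :\ e; set u := (ends e).1; set v := (ends e).2.
case/connectP=> p0 /shortenP[p pYp up _] lastp.
pose vs := u :: p; pose es := rcons (pairmap (pick_edge Y e) u p) e.
have size_es : size es = size vs by rewrite size_rcons size_pairmap.
have pY : {subset pairmap (pick_edge Y e) u p <= Y}.
  by move=> f /(mem_pick_edges pYp) [a [b [_ _ _ ->]]].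
have ues : uniq es.
  by rewrite rcons_uniq uniq_pick_edges // andbT; apply/negP => /pY; rewrite !inE eqxx.
exists (size vs).
  rewrite -size_es -(card_uniqP ues) -cardsE; apply: subset_leq_card.
  apply/subsetP => f; rewrite inE mem_rcons inE => /orP[/eqP-> // | /pY].
  by rewrite inE => /andP[].
apply/existsP; exists (in_tuple vs); apply/existsP; exists (Tuple (introT eqP size_es)).
apply/and4P; split => //=; apply/forallP => j; rewrite (tnth_nth u) (tnth_nth e) /=.
rewrite (set_nth_default u) ?ltn_pmod //.
have [jp | pj] := ltnP j (size p).
  rewrite nth_rcons size_pairmap jp (nth_pairmap u) // modn_small //.
  by have [_] := pick_edgeP e ((pathP u pYp) _ jp).
have -> : nat_of_ord j = size p by apply/eqP; rewrite eqn_leq pj -ltnS ltn_ord.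
rewrite nth_rcons size_pairmap ltnn eqxx modnn /=.
have := nth_last u (u :: p); rewrite /= => ->; rewrite -lastp /joins.
by rewrite /u /v -surjective_pairing eqxx orbT.
Qed.

Lemma girth_gt_small_indep (Hc : has_cycle ends) k :
  k < girth Hc <-> small_indep rk setT k.
Proof.
have rkP := is_rank_graph ends.
rewrite /girth; case: ex_minnP => g cyc_g min_g; split=> [lt_kg X _ cardX | small_k].
  rewrite /indep eqn_leq rk_le_card //= leqNgt; apply/negP.
  by case/dep_cycle=> l lX /min_g; lia.
rewrite ltnNge; apply/negP => le_gk; have [X cardX depX] := cycle_dep cyc_g.
by have /eqP := small_k X (subsetT X) (leq_trans (eq_leq cardX) le_gk); lia.
Qed.

End Cycles.

Local Open Scope ring_scope.

Lemma tutte_x1E (V E : finType) (ends : E -> V * V) :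
  tutte_x1 ends = rank_tutte_x1 (rk ends) setT.
Proof.
rewrite /tutte_x1 /tutte (_ : (fun p : {poly int} => p.[1]) = horner_eval 1) //.
rewrite raddf_sum /rank_tutte_x1 [RHS]big_mkcond /=; apply: eq_bigr => A _.
rewrite rmorphM rmorphXn rmorphB /= map_polyX rmorph1 map_polyC /=.
rewrite horner_evalE horner_exp !hornerE subrr expr0n subsetT /= /indep /grank.
have := rk_le_card (is_rank_graph ends) A.
have [-> _ | ne_rk le_rk] := eqVneq (rk ends A) #|A|.
  by rewrite subnn eqxx polyC1 mulr1.
by rewrite subn_eq0 leqNgt ltn_neqAle ne_rk le_rk polyC0 mulr0.
Qed.

Lemma binz_uniform_coef m r i : (r < m)%N ->
  binz (m%:Z - i%:Z - 1) (r%:Z - i%:Z) = (uniform_coef m r i)%:Z.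
Proof.
move=> rm; rewrite /binz /uniform_coef; case: leqP => [ir | ri].
  have -> : r%:Z - i%:Z = (r - i)%N by lia.
  by have -> : m%:Z - i%:Z - 1 = (m.-1 - i)%N by lia.
by have -> : (0 <= r%:Z - i%:Z) = false by lia.
Qed.

Theorem corollary3p8 (V E : finType) (ends : E -> V * V)
    (Hc : has_cycle ends) (i : nat) :
  (#|V|%:Z - (ncomp ends [set: E])%:Z - i%:Z < (girth Hc)%:Z) <->
  (tutte_x1 ends)`_i
    = binz (#|E|%:Z - i%:Z - 1) (#|V|%:Z - (ncomp ends [set: E])%:Z - i%:Z).
Proof.
have rkP := is_rank_graph ends.
have rkE : #|V|%:Z - (ncomp ends [set: E])%:Z = (rk ends setT)%:Z.
  by rewrite /rk; have := ncomp_le_card ends setT; lia.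
have rk_lt : (rk ends setT < #|E|)%N.
  case: Hc => l /cycle_dep[X _ depX].
  rewrite -cardsT; exact: (rk_lt_card rkP (subsetT X) depX).
have girth_gt0 := (girth_gt_small_indep Hc 0).2 (small_indep0 rkP (S := setT)).
have [_ eq_coefP] := rank_tutte_coef_spec_holds setT i rkP.
rewrite tutte_x1E rkE binz_uniform_coef // -cardsT eq_coefP -(girth_gt_small_indep Hc).
lia.
Qed.
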